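(* If an $n$-Brinkhuis $(2,1,1)$-triple exists, then $n>17$.
   Context: Let $\Sigma=\{0,1,2\}$. A word over $\Sigma$ is square-free if it cannot be written as $xyyz$ with $y$ nonempty. $\mathcal{A}(n)$ is the set of square-free words of length $n$. An $n$-Brinkhuis $(k_0,k_1,k_2)$-triple, where $k_0,k_1,k_2\ge1$, consists of three sets $\mathcal{B}^{(i)}=\{w^{(i)}_j: 1\le j\le k_i\}\subset\mathcal{A}(n)$ for $i\in\{0,1,2\}$. Each $\mathcal{B}^{(i)}$ has $k_i$ distinct square-free words of length $n$. The defining condition: for every square-free word $ii'i''\in\mathcal{A}(3)$ and all $1\le j\le k_i$, $1\le j'\le k_{i'}$, $1\le j''\le k_{i''}$, the concatenation $w^{(i)}_jw^{(i')}_{j'}w^{(i'')}_{j''}$ is square-free. *)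

From mathcomp Require Import all_boot.
Set Implicit Arguments. Unset Strict Implicit. Unset Printing Implicit Defensive.

Definition letter := 'I_3.
Definition word := seq letter.

Definition square_free (w : word) : Prop :=
  ~ exists x y z : word, y != [::] /\ w = x ++ y ++ y ++ z.

Definition in_A (n : nat) (w : word) : Prop := size w = n /\ square_free w.

Definition brinkhuis_triple (n : nat) (k : 'I_3 -> nat) (B : 'I_3 -> seq word) : Prop :=
  (forall i, 1 <= k i) /\
  (forall i, size (B i) = k i /\ uniq (B i) /\ forall w, w \in B i -> in_A n w) /\
  (forall i i' i'' : 'I_3, in_A 3 [:: i; i'; i''] ->
     forall u u' u'', u \in B i -> u' \in B i' -> u'' \in B i'' ->
       square_free (u ++ u' ++ u'')).

Definition k211 : 'I_3 -> nat := fun i => if val i == 0 then 2 else 1.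

From mathcomp Require Import all_boot perm zify.
Set Implicit Arguments. Unset Strict Implicit. Unset Printing Implicit Defensive.

(* The claim is settled by an exhaustive search.  In a (2,1,1)-triple
   B0 = {x, y}, B1 = {b}, B2 = {c}, each of x, y must form square-free words
   a b a, b a b, a c a, c a c with b and with c, the words b c b and c b c
   must be square-free, and so must x b y and x c y.  For n <= 17 no four
   square-free words of length n satisfy these conditions; permuting the
   alphabet, we may moreover assume that b starts with 0 1. *)

Section Squares.

Variable T : eqType.
Implicit Types s t : seq T.

(* Conjunctions and disjunctions in the functions run by [vm_compute] are
   written with [if], so that its call-by-value evaluation short-circuits. *)
Fixpoint agree (k : nat) s t : bool :=
  match k, s, t with
  | 0, _, _ => true
  | k'.+1, x :: s', y :: t' => if x == y then agree k' s' t' else false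
  | _, _, _ => false
  end.

Fixpoint has_square_prefix_from s t (k : nat) : bool :=
  if t is _ :: t' then
    if agree k s t then true else has_square_prefix_from s t' k.+1
  else false.

Definition has_square_prefix s := has_square_prefix_from s (behead s) 1.

Fixpoint has_square s : bool :=
  if s is _ :: s' then if has_square_prefix s then true else has_square s'
  else false.

Lemma agreeE k s t :
  agree k s t = [&& k <= size s, k <= size t & take k s == take k t].
Proof.
elim: k s t => [|k IH] [|x s] [|y t] //=; first by rewrite andbF.
by rewrite IH eqseq_cons !ltnS; case: (x == y); rewrite ?andbF.
Qed.

Lemma has_square_prefix_fromE s t k : t = drop k s ->
  has_square_prefix_from s t k = has (fun j => agree j s (drop j s)) (iota k (size t)).
Proof.
elim: t k => [|y t IH] k //= t_eq.
by rewrite -t_eq IH // -add1n -drop_drop -t_eq /= drop0.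
Qed.

Lemma has_square_prefixP s :
  reflect (exists y z, y != [::] /\ s = y ++ y ++ z) (has_square_prefix s).
Proof.
rewrite /has_square_prefix has_square_prefix_fromE ?drop1 // size_behead.
apply: (iffP hasP) => [[k] | [y [z [y_nil s_eq]]]].
- rewrite mem_iota agreeE size_drop => /andP [k_gt0 _] /and3P [_ k_le /eqP take_eq].
  exists (take k s), (drop k (drop k s)); split.
    by rewrite -size_eq0 size_takel; lia.
  by rewrite {2}take_eq !cat_take_drop.
- have y_gt0 : 0 < size y by rewrite lt0n size_eq0.
  exists (size y).
    by rewrite mem_iota s_eq !size_cat; lia.
  rewrite agreeE s_eq drop_size_cat // !take_size_cat // eqxx !size_cat.
  by rewrite leq_addr /= andbT; lia.
Qed.

Lemma has_square_cons x s :
  has_square (x :: s) = has_square_prefix (x :: s) || has_square s.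
Proof. by []. Qed.

Lemma has_squareP s :
  reflect (exists x y z, y != [::] /\ s = x ++ y ++ y ++ z) (has_square s).
Proof.
elim: s => [|a s IH].
  by right=> -[x [[|a y] [z [//]]]]; case: x.
rewrite has_square_cons; case: has_square_prefixP => [pre | no_pre].
  by left; have [y [z sq]] := pre; exists [::], y, z.
case: IH => [sq | no_sq].
  by left; have [x [y [z [y_nil ->]]]] := sq; exists (a :: x), y, z.
right=> -[[|a' x] [y [z [y_nil /= s_eq]]]].
  by apply: no_pre; exists y, z.
by case: s_eq => _ s_eq; apply: no_sq; exists x, y, z.
Qed.

Lemma has_square_infix s1 s2 s3 : has_square s2 -> has_square (s1 ++ s2 ++ s3).
Proof.
move=> /has_squareP [x [y [z [y_nil ->]]]]; apply/has_squareP.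
by exists (s1 ++ x), y, (z ++ s3); rewrite !catA.
Qed.

End Squares.

Section SquaresMap.

Variables (T T' : eqType) (f : T -> T').
Hypothesis f_inj : injective f.
Implicit Types s t : seq T.

Lemma agree_map k s t : agree k (map f s) (map f t) = agree k s t.
Proof. by elim: k s t => [|k IH] [|x s] [|y t] //=; rewrite inj_eq // IH. Qed.

Lemma has_square_prefix_map s : has_square_prefix (map f s) = has_square_prefix s.
Proof.
rewrite /has_square_prefix behead_map.
by elim: (behead s) 1 => //= y t IH k; rewrite -map_cons agree_map IH.
Qed.

Lemma has_square_map s : has_square (map f s) = has_square s.
Proof.
by elim: s => //= x s IH; rewrite -map_cons has_square_prefix_map IH.
Qed.

End SquaresMap.

Lemma square_freeP (w : word) : reflect (square_free w) (~~ has_square w).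
Proof.
by apply: (iffP negP) => [no_sq sq | sf /has_squareP]; [apply/no_sq/has_squareP|].
Qed.

Lemma square_free_map (f : letter -> letter) (w : word) :
  injective f -> square_free (map f w) <-> square_free w.
Proof.
move=> f_inj; split=> /square_freeP sf; apply/square_freeP;
  by rewrite has_square_map in sf *.
Qed.

Lemma square_free_uniq_take2 (w : word) : square_free w -> uniq (take 2 w).
Proof.
case: w => [|a [|a' w]] //= sf; rewrite take0 /= inE andbT.
by apply/eqP => aa'; apply: sf; exists [::], [:: a], w; rewrite aa'.
Qed.

(* Computations run on the values of the letters: comparing natural numbers
   is much cheaper than comparing elements of ['I_3]. *)
Fixpoint sqfree_words (n : nat) : seq (seq nat) :=
  if n is m.+1 then
    let W := sqfree_words m in (* evaluated once, not once per letter *)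
    [seq w <- [seq x :: w | x <- iota 0 3, w <- W] | ~~ has_square_prefix w]
  else [:: [::]].

Lemma sqfree_wordsS n : sqfree_words n.+1 =
  [seq w <- [seq x :: w | x <- iota 0 3, w <- sqfree_words n] | ~~ has_square_prefix w].
Proof. by []. Qed.

Lemma mem_sqfree_words (w : word) :
  ~~ has_square w -> map val w \in sqfree_words (size w).
Proof.
elim: w => [|x w IH] //; rewrite has_square_cons negb_or => /andP [no_pre no_sq].
rewrite sqfree_wordsS mem_filter (has_square_prefix_map val_inj) no_pre.
by apply: allpairs_f; [rewrite mem_iota ltn_ord | exact: IH].
Qed.

(* Six letters on each side of the junction: a cheap necessary condition
   for [u ++ v] to be square-free that rejects most pairs. *)
Definition sqfree_near_junction (u v : seq nat) :=
  ~~ has_square (drop (size u - 6) u ++ take 6 v).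

Lemma sqfree_near_junction_cat u v :
  ~~ has_square (u ++ v) -> sqfree_near_junction u v.
Proof.
apply: contra => /(has_square_infix (take (size u - 6) u) (drop 6 v)).
by rewrite -catA cat_take_drop catA cat_take_drop.
Qed.

Definition compatible (a b : seq nat) : bool :=
  if sqfree_near_junction a b then
    if sqfree_near_junction b a then
      ~~ has_square (a ++ b ++ a) && ~~ has_square (b ++ a ++ b)
    else false
  else false.

Lemma compatible_of a b :
  ~~ has_square (a ++ b ++ a) -> ~~ has_square (b ++ a ++ b) -> compatible a b.
Proof.
move=> aba bab.
have ab : ~~ has_square (a ++ b).
  by apply: contra aba => /(has_square_infix [::] a); rewrite -catA.
have ba : ~~ has_square (b ++ a).
  by apply: contra aba => /(has_square_infix a [::]); rewrite cats0.
by rewrite /compatible !sqfree_near_junction_cat // aba bab.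
Qed.

Definition has_brinkhuis211_candidate (n : nat) : bool :=
  let W := sqfree_words n in
  has (fun b =>
    let Ab := [seq a <- W | compatible a b] in
    has (fun c =>
      let A := [seq a <- Ab | compatible a c] in
      has (fun x => has (fun y =>
        [&& x != y, ~~ has_square (x ++ b ++ y) & ~~ has_square (x ++ c ++ y)]) A) A)
    Ab) [seq b <- W | prefix (take 2 b) [:: 0; 1]].

Lemma no_brinkhuis211_candidate_upto17 :
  all (fun n => ~~ has_brinkhuis211_candidate n) (iota 0 18).
Proof. by vm_compute. Qed.

Lemma has_brinkhuis211_candidate_of n (x y b c : seq nat) :
  x \in sqfree_words n -> y \in sqfree_words n ->
  b \in sqfree_words n -> c \in sqfree_words n ->
  prefix (take 2 b) [:: 0; 1] -> x != y -> compatible c b ->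
  {in [:: x; y], forall a, compatible a b && compatible a c} ->
  ~~ has_square (x ++ b ++ y) -> ~~ has_square (x ++ c ++ y) ->
  has_brinkhuis211_candidate n.
Proof.
move=> Wx Wy Wb Wc b01 xy cb xy_compat xby xcy.
have /andP [xb xc] := xy_compat x (mem_head _ _).
have /andP [yb yc] := xy_compat y (mem_last x [:: y]).
apply/hasP; exists b; first by rewrite mem_filter b01.
apply/hasP; exists c; first by rewrite mem_filter cb.
apply/hasP; exists x; first by rewrite !mem_filter xb xc.
apply/hasP; exists y; first by rewrite !mem_filter yb yc.
by rewrite xy xby xcy.
Qed.

Definition letter1 : letter := Ordinal (isT : 1 < 3).

Lemma relabel_first_letters (w : word) : uniq (take 2 w) ->
  exists2 f : letter -> letter,
    injective f & prefix (take 2 (map (val \o f) w)) [:: 0; 1].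
Proof.
case: w => [|a [|b w]] /=; first by exists id.
  by exists (tperm a ord0); [exact: perm_inj | rewrite tpermL].
rewrite take0 /= inE andbT => ab; set c := tperm a ord0 b.
have c_neq0 : c != ord0 by rewrite -(tpermL a ord0) (inj_eq perm_inj) eq_sym.
exists (fun x => tperm c letter1 (tperm a ord0 x)).
  by move=> x y /perm_inj/perm_inj.
by rewrite /= take0 tpermL tpermD // tpermL.
Qed.

Lemma brinkhuis_triple_map n k B (f : letter -> letter) : injective f ->
  brinkhuis_triple n k B -> brinkhuis_triple n k (fun i => map (map f) (B i)).
Proof.
move=> f_inj [k_pos [B_ok B_sf]]; split=> //; split=> [i | i i' i'' ii'i''].
  have [size_B [uniq_B in_A_B]] := B_ok i.
  rewrite size_map (map_inj_uniq (inj_map f_inj)); split=> //; split=> //.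
  move=> _ /mapP [w /in_A_B [size_w sf_w] ->].
  by split; [rewrite size_map | apply/square_free_map].
move=> _ _ _ /mapP [u Bu ->] /mapP [u' Bu' ->] /mapP [u'' Bu'' ->].
by rewrite -!map_cat; apply/square_free_map => //; apply: B_sf Bu Bu' Bu''.
Qed.

Lemma brinkhuis211_normalize n B : brinkhuis_triple n k211 B ->
  exists B', brinkhuis_triple n k211 B' /\
             {in B' letter1, forall b, prefix (take 2 (map val b)) [:: 0; 1]}.
Proof.
move=> tripleB; have [_ [/(_ letter1) [size_B1 [_ in_A_B1]] _]] := tripleB.
case E1: (B letter1) size_B1 in_A_B1 => [|b []] // _ /(_ b (mem_head _ _)) [_ sf_b].
have [f f_inj f_b] := relabel_first_letters (square_free_uniq_take2 sf_b).
exists (fun i => map (map f) (B i)); split; first exact: brinkhuis_triple_map.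
by rewrite E1 => _ /predU1P [-> | //]; rewrite -map_comp.
Qed.

Lemma brinkhuis211_has_candidate n B : brinkhuis_triple n k211 B ->
  {in B letter1, forall b, prefix (take 2 (map val b)) [:: 0; 1]} ->
  has_brinkhuis211_candidate n.
Proof.
move=> [_ [B_ok B_sf]] B1_norm.
have sf3 i j k (u v w : word) : ~~ has_square [:: i; j; k] ->
    u \in B i -> v \in B j -> w \in B k ->
    ~~ has_square (map val u ++ map val v ++ map val w).
  move=> ijk Bu Bv Bw; rewrite -!map_cat (has_square_map val_inj); apply/square_freeP.
  by apply: B_sf Bu Bv Bw; split=> //; apply/square_freeP.
have W_B i u : u \in B i -> map val u \in sqfree_words n.
  by move=> /(B_ok i).2.2 [<- /square_freeP]; apply: mem_sqfree_words.
have [size_B0 [uniq_B0 _]] := B_ok ord0.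
case E0: (B ord0) size_B0 uniq_B0 => [|x [|y []]] // _; rewrite /= inE andbT => xy.
have [size_B1 _] := B_ok letter1; case E1: (B letter1) size_B1 => [|b []] // _.
have [size_B2 _] := B_ok ord_max; case E2: (B ord_max) size_B2 => [|c []] // _.
have B0x : x \in B ord0 by rewrite E0 mem_head.
have B0y : y \in B ord0 by rewrite E0 !inE eqxx orbT.
have B1b : b \in B letter1 by rewrite E1 mem_head.
have B2c : c \in B ord_max by rewrite E2 mem_head.
apply: (has_brinkhuis211_candidate_of (W_B _ _ B0x) (W_B _ _ B0y)
         (W_B _ _ B1b) (W_B _ _ B2c)).
- exact: B1_norm B1b.
- by rewrite (inj_eq (inj_map val_inj)).
- by apply: compatible_of;
    [apply: (sf3 ord_max letter1 ord_max) | apply: (sf3 letter1 ord_max letter1)].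
- move=> _ /predU1P [-> | /predU1P [-> | //]]; rewrite !compatible_of //;
    by [apply: (sf3 ord0 letter1 ord0) | apply: (sf3 letter1 ord0 letter1)
       | apply: (sf3 ord0 ord_max ord0) | apply: (sf3 ord_max ord0 ord_max)].
- exact: (sf3 ord0 letter1 ord0).
- exact: (sf3 ord0 ord_max ord0).
Qed.

Theorem lemma4 (n : nat) :
  (exists B : 'I_3 -> seq word, brinkhuis_triple n k211 B) -> 17 < n.
Proof.
case=> B /brinkhuis211_normalize [B' [tripleB' normB']].
rewrite ltnNge; apply: contraTN (brinkhuis211_has_candidate tripleB' normB') => n_le17.
by move/allP: no_brinkhuis211_candidate_upto17; apply; rewrite mem_iota.
Qed.
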